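(* Let $n\ge2$, $h\ge1$, $0\le l\le (n-1)h$ be integers, $N=nh$, and let $\mathcal{F}=\{p_1,\dots,p_N\}$. For $i=1,\dots,n$ let $B_i=\{p_{(i-1)h+1},\dots,p_{ih}\}$, let $R_i$ be a uniformly random $l$-element subset of $\mathcal{F}\setminus B_i$, the $R_i$ chosen independently, and let $G_i=B_i\cup R_i$, $g=h+l$. Let $\pi=\frac{l}{(n-1)h}$ and $\bar\pi=1-\pi$. Then for any $I\subset\{1,\dots,n\}$ with $|I|=s$ and any $j\in\{1,\dots,n\}\setminus I$, \[ \Omega(s):=E\Bigl[\Bigl|\Bigl(\bigcup_{i\in I}G_i\Bigr)\cap G_j\Bigr|\Bigr]=g\bigl[1-\bar\pi^s\bigr]+sh\,\pi\,\bar\pi^s . \] Moreover, when $n\to\infty$ with $l/h\to\alpha$ and $s/n\to\beta$, writing $\omega(\beta)=\Omega(s)$, one has $\omega(\beta)\to h\bigl[(1+\alpha)(1-e^{-\alpha\beta})+\alpha\beta e^{-\alpha\beta}\bigr]$.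
   Context: This describes the ''random annex code'': $B_i$ are base generations, $R_i$ random annexes, $G_i$ extended generations. *)

From HB Require Import structures.
From mathcomp Require Import all_boot all_order all_algebra.
From mathcomp Require Import all_classical all_reals all_analysis.
Set Implicit Arguments. Unset Strict Implicit. Unset Printing Implicit Defensive.
Import Order.TTheory GRing.Theory Num.Theory.
Local Open Scope ring_scope.

(* Points p_1..p_N are 'I_(n*h) (0-indexed); generations i : 'I_n (0-indexed). *)
(* Base generation B_i = {p : p %/ h = i}, i.e. p_{(i-1)h+1},...,p_{ih}. *)
Definition block (n h : nat) (i : 'I_n) : {set 'I_(n * h)} :=
  [set p : 'I_(n * h) | (p %/ h)%N == i].

(* The sample space: families (R_i)_i of l-subsets R_i of F \ B_i.
   Independent uniform choices = uniform distribution on this finite set. *)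
Definition annexes (n h l : nat) : {set {ffun 'I_n -> {set 'I_(n * h)}}} :=
  [set Rf : {ffun 'I_n -> {set 'I_(n * h)}} | [forall i : 'I_n, (Rf i \subset ~: block h i) && (#|Rf i| == l)]].

Definition ext_gen (n h : nat) (Rf : {ffun 'I_n -> {set 'I_(n * h)}}) (i : 'I_n)
  : {set 'I_(n * h)} := block h i :|: Rf i.

Definition Omega (R : realType) (n h l : nat) (I : {set 'I_n}) (j : 'I_n) : R :=
  (\sum_(Rf in annexes n h l)
      (#|(\bigcup_(i in I) ext_gen Rf i) :&: ext_gen Rf j|)%:R)
  / (#|annexes n h l|)%:R.

(* Omega(s) is the expected size of a random set, so by linearity it is the sum over the
   points p of the probability that p lies in G_j and in some G_i, i in I.  The annexes are
   independent, so this probability factors as P(p in G_j) (1 - prod_(i in I) P(p \notin G_i)),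
   and a uniform l-subset of the m = (n-1)h points outside B_i misses a given one of them
   with probability 'C(m-1, l) / 'C(m, l) = 1 - pi.  The factors only depend on the block
   of p, and summing over the n blocks of h points gives the closed form.  In the limit
   pi ~ alpha / n and s pi -> alpha beta, and (1 - pi)^s -> exp(- alpha beta) by squeezing
   it between exp(- s pi / (1 - pi)) and exp(- s pi), both instances of 1 + x <= e^x. *)

From HB Require Import structures.
From mathcomp Require Import all_boot all_order all_algebra.
From mathcomp Require Import all_classical all_reals all_analysis.
From mathcomp Require Import zify ring lra.
Import Order.TTheory GRing.Theory Num.Theory.
Import numFieldNormedType.Exports.
Local Open Scope ring_scope.

Set Implicit Arguments. Unset Strict Implicit.

Section UniformLaw.
Context {R : fieldType} {T : finType}.

Definition uprob (A : {set T}) (E : pred T) : R :=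
  #|[set x in A | E x]|%:R / #|A|%:R.

Lemma expected_card (U : finType) (A : {set T}) (X : T -> {set U}) :
  (\sum_(x in A) (#|X x|%:R : R)) / #|A|%:R = \sum_u uprob A (fun x => u \in X x).
Proof.
rewrite /uprob -mulr_suml -!natr_sum; congr (_%:R / _).
rewrite (eq_bigr (fun x => \sum_u (u \in X x) : nat)); last first.
  by move=> x _; rewrite -sum1_card big_mkcond.
rewrite exchange_big /=; apply: eq_bigr => u _.
rewrite -sum1_card big_mkcond [RHS]big_mkcond; apply: eq_bigr => x _.
by rewrite !inE; case: (x \in A).
Qed.

Lemma eq_uprob (A : {set T}) (E E' : pred T) : E =1 E' -> uprob A E = uprob A E'.
Proof.
by move=> EE; rewrite /uprob (eq_card (B := [set x in A | E' x])) // => x; rewrite !inE EE.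
Qed.

Lemma uprob_andN (A : {set T}) (E F : pred T) :
  uprob A (fun x => E x && ~~ F x) = uprob A E - uprob A (fun x => E x && F x).
Proof.
have splitE : #|[set x in A | E x]| =
    (#|[set x in A | E x && ~~ F x]| + #|[set x in A | E x && F x]|)%N.
  rewrite addnC -(cardsID [set x | F x] [set x in A | E x]); congr (_ + _)%N;
    apply: eq_card => x; rewrite !inE; by case: (F x); rewrite ?andbT ?andbF.
by rewrite /uprob splitE natrD -mulrBl addrK.
Qed.

End UniformLaw.

Section UniformProduct.
Context {R : fieldType}.
Variables (aT rT : finType) (F : aT -> {set rT}).

Definition prodset : {set {ffun aT -> rT}} := [set f : {ffun aT -> rT} | [forall i, f i \in F i]].

Lemma card_prodset_event (E : aT -> pred rT) :
  #|[set f in prodset | [forall i, E i (f i)]]| = \prod_i #|[set x in F i | E i x]|.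
Proof.
have -> : [set f in prodset | [forall i, E i (f i)]] =
          [set f in family (fun i => [set x in F i | E i x])].
  apply/setP => f; rewrite !inE; apply/andP/familyP => [[/forallP FF /forallP EE] i|H].
    by rewrite inE FF EE.
  by split; apply/forallP => i; have := H i; rewrite inE => /andP[].
by rewrite cardsE card_family foldrE big_map big_enum.
Qed.

Lemma uprob_prodset (E : aT -> pred rT) :
  uprob prodset (fun f => [forall i, E i (f i)]) = \prod_i uprob (F i) (E i) :> R.
Proof.
have cardP : #|prodset| = \prod_i #|F i|.
  rewrite [LHS](eq_card (B := [set f in prodset | [forall i, xpredT (f i)]])).
    rewrite (card_prodset_event (fun _ => xpredT)); apply: eq_bigr => i _.
    by apply: eq_card => x; rewrite !inE andbT.
  move=> f; rewrite !inE; have -> : [forall i : aT, true] by apply/forallP.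
  by rewrite andbT.
by rewrite /uprob /= card_prodset_event cardP !natr_prod -prodf_div.
Qed.

End UniformProduct.

Section Draws.
Variables (T : finType) (D : {set T}) (l : nat).

Definition draws : {set {set T}} := [set S : {set T} | (S \subset D) && (#|S| == l)].

Lemma card_draws_notin (p : T) : p \in D ->
  #|[set S in draws | p \notin S]| = 'C(#|D|.-1, l).
Proof.
move=> pD; rewrite (cardsD1 p D) pD -cards_draws; apply: eq_card => S.
by rewrite !inE subsetD1 andbAC.
Qed.

Lemma uprob_draws_notin {R : numFieldType} (p : T) : p \in D -> (l <= #|D|)%N ->
  uprob draws (fun S => p \notin S) = 1 - l%:R / #|D|%:R :> R.
Proof.
move=> pD lD; have D0 : (0 < #|D|)%N by apply/card_gt0P; exists p.
have nzC : ('C(#|D|, l)%:R : R) != 0 by rewrite pnatr_eq0 -lt0n bin_gt0.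
have nzD : (#|D|%:R : R) != 0 by rewrite pnatr_eq0 -lt0n.
rewrite /uprob card_draws_notin // cards_draws.
apply: (mulIf nzC); rewrite divfK //; apply: (mulfI nzD).
rewrite -natrM mul_bin_down natrM natrB //; field.
by rewrite nzD.
Qed.

Lemma uprob_draws_true {R : numFieldType} : (l <= #|D|)%N -> uprob draws xpredT = 1 :> R.
Proof.
move=> lD; rewrite /uprob (eq_card (B := draws)) => [|S]; last by rewrite !inE andbT.
by rewrite divff // cards_draws pnatr_eq0 -lt0n bin_gt0.
Qed.

End Draws.

Lemma sum_div_blocks (V : nmodType) (n h : nat) (F : nat -> V) : (0 < h)%N ->
  \sum_(p < n * h) F (p %/ h)%N = (\sum_(k < n) F k) *+ h.
Proof.
move=> h0; rewrite -(big_mkord xpredT F) -(big_mkord xpredT (fun p => F (p %/ h)%N)) /=.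
elim: n => [|n IH]; first by rewrite mul0n !big_geq // mul0rn.
rewrite mulSnr (big_cat_nat (n := n * h)) //= ?leq_addr // IH big_nat_recr //= mulrnDl.
congr (_ + _); rewrite (eq_big_nat _ _ (F2 := fun _ => F n)) => [|p /andP[np pn]].
  by rewrite sumr_const_nat addnC addnK.
congr F; apply/eqP; rewrite eqn_leq -ltnS !(leq_divRL, ltn_divLR) //; lia.
Qed.

Lemma sum_three_valued (V : zmodType) (T : finType) (I : {set T}) (j : T) (a b c : V) :
  j \notin I ->
  \sum_k (if k == j then a else if k \in I then b else c) =
  a + b *+ #|I| + c *+ (#|T| - #|I|).-1.
Proof.
move=> jI; rewrite (bigD1 j) //= eqxx -addrA; congr (_ + _).
rewrite (bigID (mem I)) /=.
rewrite (eq_bigr (fun _ => b)) => [|k /andP[kj kI]]; last by rewrite (negbTE kj) kI.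
rewrite [X in _ + X](eq_bigr (fun _ => c)) => [|k /andP[kj kI]]; last first.
  by rewrite (negbTE kj) (negbTE kI).
rewrite !sumr_const; congr (b *+ _ + c *+ _).
  rewrite (@eq_card _ _ I) // => k.
  by rewrite unfold_in /= andb_idl // => kI; apply: contraNneq jI => <-.
rewrite [LHS](@eq_card _ _ (~: (j |: I))) => [|k]; last by rewrite unfold_in /= !inE negb_or.
by move: (cardsC (j |: I)); rewrite cardsU1 jI /= add1n; lia.
Qed.

Lemma prod_if_eq (V : comNzRingType) (T : finType) (A : {set T}) (k : T) (a : V) :
  \prod_(i in A) (if k == i then 0 else a) = if k \in A then 0 else a ^+ #|A|.
Proof.
case: ifP => kA; first by rewrite (bigD1 k) //= eqxx mul0r.
rewrite -prodr_const; apply: eq_bigr => i iA; case: eqVneq => // ki.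
by rewrite ki iA in kA.
Qed.

Section RandomAnnex.
Variables (R : numFieldType) (n h l : nat) (I : {set 'I_n}) (j : 'I_n).
Hypotheses (h_gt0 : (0 < h)%N) (l_le : (l <= (n - 1) * h)%N) (jI : j \notin I).

Let pi : R := l%:R / ((n - 1) * h)%:R.

Lemma card_block (i : 'I_n) : #|block h i| = h.
Proof.
apply/eqP; rewrite -(eqr_nat int) -sumr_const big_mkcond /=.
rewrite (eq_bigr (fun p : 'I_(n * h) => ((p %/ h)%N == i)%:R)) => [|p _]; last first.
  by rewrite inE; case: eqP.
rewrite (sum_div_blocks _ (fun k => (k == i)%:R)) // (bigD1 i) //= eqxx big1 ?addr0 // => k.
by move=> ki; case: eqP => // /val_inj kiE; rewrite kiE eqxx in ki.
Qed.

Lemma card_blockC (i : 'I_n) : #|~: block h i| = ((n - 1) * h)%N.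
Proof. by rewrite mulnBl mul1n; move: (cardsC (block h i)); rewrite card_ord card_block; lia. Qed.

Lemma annexesE : annexes n h l = prodset (fun i => draws (~: block h i) l).
Proof. by apply/setP => Rf; rewrite !inE; apply: eq_forallb => i; rewrite inE. Qed.

Lemma uprob_annex_true (i : 'I_n) : uprob (R := R) (draws (~: block h i) l) xpredT = 1.
Proof. by rewrite uprob_draws_true // card_blockC. Qed.

Lemma uprob_notin_gen (i : 'I_n) (p : 'I_(n * h)) :
  uprob (draws (~: block h i) l) (fun S => p \notin block h i :|: S) =
  if p \in block h i then 0 else 1 - pi.
Proof.
case: ifP => pB.
  rewrite /uprob (eq_card0 (A := [set S in _ | _])) ?mul0r // => S.
  by rewrite inE finset.in_setU pB andbF.
rewrite (@eq_uprob _ _ _ _ (fun S : {set 'I_(n * h)} => p \notin S)) => [|S]; last first.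
  by rewrite finset.in_setU pB.
by rewrite uprob_draws_notin ?card_blockC // inE pB.
Qed.

Lemma uprob_in_gen (i : 'I_n) (p : 'I_(n * h)) :
  uprob (draws (~: block h i) l) (fun S => p \in block h i :|: S) =
  if p \in block h i then 1 else pi.
Proof.
have := uprob_andN (R := R) (draws (~: block h i) l) xpredT (fun S => p \notin block h i :|: S).
rewrite uprob_annex_true uprob_notin_gen.
rewrite (@eq_uprob _ _ _ _ (fun S : {set 'I_(n * h)} => p \in block h i :|: S)) => [|S].
  by case: ifP => _ ->; rewrite ?subr0 // opprB addrC subrK.
by rewrite negbK.
Qed.

Local Notation annex := {ffun 'I_n -> {set 'I_(n * h)}}.

Definition overlap (Rf : annex) : {set 'I_(n * h)} :=
  (\bigcup_(i in I) ext_gen Rf i) :&: ext_gen Rf j.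

Lemma uprob_in_overlap (p : 'I_(n * h)) :
  uprob (annexes n h l) (fun Rf => p \in overlap Rf) =
  (if p \in block h j then 1 else pi) *
  (1 - \prod_(i in I) (if p \in block h i then 0 else 1 - pi)).
Proof.
pose hit i (S : {set 'I_(n * h)}) := p \in block h i :|: S.
pose Ej i S := (i == j) ==> hit i S.
pose EIj i S := Ej i S && ((i \in I) ==> ~~ hit i S).
have forall_Ej (Rf : annex) : [forall i, Ej i (Rf i)] = (p \in ext_gen Rf j).
  by apply/forallP/idP => [/(_ j)|pG i]; rewrite /Ej ?eqxx //; apply/implyP => /eqP ->.
have overlapE (Rf : annex) : (p \in overlap Rf) =
    [forall i, Ej i (Rf i)] && ~~ [forall i, (i \in I) ==> ~~ hit i (Rf i)].
  rewrite forall_Ej finset.in_setI andbC; congr (_ && _).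
  apply/bigcupP/forallPn => [[i iI piG]|[i]]; first by exists i; rewrite iI negbK.
  by rewrite negb_imply negbK => /andP[iI piG]; exists i.
(* Both events are intersections of coordinate events, so [uprob_prodset] factors them. *)
rewrite (eq_uprob _ overlapE) uprob_andN.
rewrite [X in _ - X](@eq_uprob _ _ _ _ (fun Rf : annex => [forall i, EIj i (Rf i)])) => [|Rf];
  last first.
  apply/andP/forallP => [[/forallP Ej_Rf /forallP I_Rf] i|EIj_Rf]; first by rewrite /EIj Ej_Rf I_Rf.
  by split; apply/forallP => i; have /andP[] := EIj_Rf i.
have hit_j : uprob (draws (~: block h j) l) (Ej j) = if p \in block h j then 1 else pi :> R.
  by rewrite -uprob_in_gen; apply: eq_uprob => S; rewrite /Ej eqxx.
have all_i i : i != j -> uprob (draws (~: block h i) l) (Ej i) = 1 :> R.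
  by move=> ij; rewrite -(uprob_annex_true i); apply: eq_uprob => S; rewrite /Ej (negbTE ij).
have prod_Ej :
    \prod_i uprob (draws (~: block h i) l) (Ej i) = if p \in block h j then 1 else pi :> R.
  by rewrite (bigD1 j) //= hit_j big1 ?mulr1 // => i /all_i.
have prod_EIj : \prod_i uprob (draws (~: block h i) l) (EIj i) =
    (if p \in block h j then 1 else pi) *
    \prod_(i in I) (if p \in block h i then 0 else 1 - pi) :> R.
  rewrite (bigD1 j) //= -hit_j; congr (_ * _).
    by apply: eq_uprob => S; rewrite /EIj (negbTE jI) andbT.
  rewrite [RHS]big_mkcond [in RHS](bigD1 j) //= (negbTE jI) mul1r; apply: eq_bigr => i ij.
  case: ifP => iI.
    by rewrite -uprob_notin_gen; apply: eq_uprob => S; rewrite /EIj /Ej (negbTE ij) iI.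
  by rewrite -(uprob_annex_true i); apply: eq_uprob => S; rewrite /EIj /Ej (negbTE ij) iI.
by rewrite annexesE !uprob_prodset prod_Ej prod_EIj mulrBr mulr1.
Qed.

Lemma expected_overlap :
  (\sum_(Rf in annexes n h l) (#|overlap Rf|%:R : R)) / #|annexes n h l|%:R =
  (h + l)%:R * (1 - (1 - pi) ^+ #|I|) + (#|I| * h)%:R * pi * (1 - pi) ^+ #|I|.
Proof.
pose q := 1 - pi; pose s := #|I|.
pose F (k : nat) := (if k == j then 1 else pi) * (1 - \prod_(i in I) (if k == i then 0 else q)).
rewrite expected_card (eq_bigr (fun p : 'I_(n * h) => F (p %/ h)%N)) => [|p _]; last first.
  by rewrite uprob_in_overlap inE; congr (_ * (1 - _)); apply: eq_bigr => i _; rewrite inE.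
rewrite sum_div_blocks // (eq_bigr (fun k : 'I_n => if k == j then 1 - q ^+ s
                                   else if k \in I then pi else pi * (1 - q ^+ s))) => [|k _]; last first.
  rewrite /F val_eqE (eq_bigr (fun i => if k == i then 0 else q)) => [|i _]; last by rewrite val_eqE.
  rewrite prod_if_eq; case: eqVneq => [->|kj]; first by rewrite (negbTE jI) mul1r.
    by case: ifP; rewrite ?subr0 ?mulr1.
rewrite sum_three_valued // card_ord.
have s_lt : (s < n)%N.
  by move: (max_card (j |: I)); rewrite cardsU1 jI card_ord.
(* If (n - 1) h = 0 then l = 0, and pi = 0 by the convention x / 0 = 0. *)
have l_pi : l%:R = pi * ((n - 1) * h)%:R :> R.
  have [m0|m_gt0] := eqVneq ((n - 1) * h)%N 0%N.
    by move: l_le; rewrite m0 leqn0 => /eqP ->; rewrite mulr0.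
  by rewrite /pi divfK // pnatr_eq0.
have e : ((n - #|I|).-1)%:R = (n - 1)%:R - #|I|%:R :> R.
  by rewrite -subn1 subnAC natrB // -ltnS subn1 prednK // (leq_ltn_trans _ s_lt).
rewrite /q /s natrD l_pi !natrM -[_ *+ h]mulr_natr -[pi *+ _]mulr_natr.
rewrite -[_ *+ (n - _).-1]mulr_natr e.
ring.
Qed.

End RandomAnnex.

Lemma Omega_closed_form (R : realType) (n h l : nat) (I : {set 'I_n}) (j : 'I_n) :
  (0 < h)%N -> (l <= (n - 1) * h)%N -> j \notin I ->
  let pi : R := l%:R / ((n - 1) * h)%:R in
  Omega R h l I j = (h + l)%:R * (1 - (1 - pi) ^+ #|I|) + (#|I| * h)%:R * pi * (1 - pi) ^+ #|I|.
Proof. exact: expected_overlap. Qed.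

Local Open Scope classical_set_scope.
Local Open Scope ring_scope.

Lemma cvg_one_sub_pow (R : realType) (p : nat -> R) (s : nat -> nat) (c : R) :
  (forall k, 0 <= p k <= 1) -> p @ \oo --> 0 ->
  (fun k => (s k)%:R * p k) @ \oo --> c ->
  (fun k => (1 - p k) ^+ s k) @ \oo --> expR (- c).
Proof.
move=> p01 p0 sc.
have q1 : (1 - p k) @[k --> \oo] --> (1 : R).
  by have := cvgB (cvg_cst (1 : R)) p0; rewrite subr0 => H; exact: H.
have q1V : (1 - p k)^-1 @[k --> \oo] --> (1 : R).
  by have := cvgV (oner_neq0 R) q1; rewrite invr1 => H; exact: H.
have scV : (s k)%:R * p k / (1 - p k) @[k --> \oo] --> c.
  by have := cvgM sc q1V; rewrite mulr1 => H; exact: H.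
apply: (@squeeze_cvgr _ _ _ _ (fun k => expR (- ((s k)%:R * p k / (1 - p k))))
          (fun k => expR (- ((s k)%:R * p k)))).
- near=> k.
  have pl1 : p k < 1 by near: k; exact: (cvgr_lt 0 p0 1 ltr01).
  have /andP[pk0 pk1] := p01 k.
  apply/andP; split.
  + rewrite -mulrA -mulrN expRM_natl lerXn2r ?nnegrE ?expR_ge0 ?subr_ge0 //.
    rewrite expRN -[leRHS]invrK lef_pV2 ?posrE ?expR_gt0 ?invr_gt0 ?subr_gt0 //.
    have e : 1 + p k / (1 - p k) = (1 - p k)^-1.
      by field; rewrite subr_eq0; apply/eqP => e1; move: pl1; rewrite -e1 ltxx.
    by rewrite -[leLHS]e; exact: expR_ge1Dx.
  + rewrite -mulrN expRM_natl lerXn2r ?nnegrE ?expR_ge0 ?subr_ge0 //.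
    by have := expR_ge1Dx (- p k); rewrite addrC.
- exact: (continuous_cvg _ (@continuous_expR R _) (cvgN scV)).
- exact: (continuous_cvg _ (@continuous_expR R _) (cvgN sc)).
Unshelve. all: by end_near.
Qed.

Lemma cvg_annex_rate (R : realType) (N x S : R^nat) (a b : R) :
  (forall k, 1 < N k) -> N k @[k --> \oo] --> +oo -> x k @[k --> \oo] --> a ->
  S k / N k @[k --> \oo] --> b ->
  x k / (N k - 1) @[k --> \oo] --> 0 /\ S k * (x k / (N k - 1)) @[k --> \oo] --> a * b.
Proof.
move=> N_gt1 Noo xa Sb.
have inv0 : (N k - 1)^-1 @[k --> \oo] --> (0 : R).
  apply/gtr0_cvgV0; first by apply: nearW => k; rewrite subr_gt0.
  apply/cvgryPge => A; move/cvgryPge: Noo => /(_ (A + 1)); apply: filterS => k /=; lra.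
split; first by have := cvgM xa inv0; rewrite mulr0 => H; exact: H.
have eSx k : S k * (x k / (N k - 1)) = S k / N k * x k * (1 + (N k - 1)^-1).
  have := N_gt1 k; rewrite -subr_gt0 => N1; field.
  by rewrite gt_eqF // gt_eqF // (lt_trans ltr01) // -subr_gt0.
under eq_fun do rewrite eSx.
have := cvgM (cvgM Sb xa) (cvgD (cvg_cst (1 : R)) inv0).
by rewrite addr0 mulr1 mulrC => H; exact: H.
Qed.

Lemma Omega_limit (R : realType) (alpha beta : R) (n h l : nat -> nat)
    (I : forall k, {set 'I_(n k)}) (j : forall k, 'I_(n k)) :
  (forall k, [/\ (2 <= n k)%N, (1 <= h k)%N, (l k <= (n k - 1) * h k)%N & j k \notin I k]) ->
  ((n k)%:R : R) @[k --> \oo] --> +oo ->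
  ((l k)%:R / (h k)%:R : R) @[k --> \oo] --> alpha ->
  ((#|I k|)%:R / (n k)%:R : R) @[k --> \oo] --> beta ->
  (Omega R (h k) (l k) (I k) (j k) / (h k)%:R) @[k --> \oo] -->
    (1 + alpha) * (1 - expR (- (alpha * beta))) + alpha * beta * expR (- (alpha * beta)).
Proof.
move=> bounds Noo xa Sb.
pose x k : R := (l k)%:R / (h k)%:R.
pose p k : R := (l k)%:R / ((n k - 1) * h k)%:R.
have N_gt1 k : 1 < (n k)%:R :> R by have [n2 _ _ _] := bounds k; rewrite ltr1n.
have px k : p k = x k / ((n k)%:R - 1).
  have [n2 h1 _ _] := bounds k; have := N_gt1 k; rewrite -subr_gt0 => N1.
  rewrite /p /x natrM natrB ?(ltnW n2) //; field.
  by rewrite gt_eqF // pnatr_eq0 -lt0n h1.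
have p01 k : 0 <= p k <= 1.
  have [n2 h1 hl _] := bounds k.
  rewrite /p divr_ge0 ?ler0n //= ler_pdivrMr ?mul1r ?ler_nat // ltr0n muln_gt0 h1 andbT.
  lia.
have [p0 Sp] := cvg_annex_rate N_gt1 Noo xa Sb.
have p0' : p k @[k --> \oo] --> 0 by under eq_fun do rewrite px; exact: p0.
have Sp' : #|I k|%:R * p k @[k --> \oo] --> alpha * beta.
  by under eq_fun do rewrite px; exact: Sp.
have pow := cvg_one_sub_pow (s := fun k => #|I k|) p01 p0' Sp'.
have Omega_k k : Omega R (h k) (l k) (I k) (j k) / (h k)%:R =
    (1 + x k) * (1 - (1 - p k) ^+ #|I k|) + #|I k|%:R * p k * (1 - p k) ^+ #|I k|.
  have [n2 h1 hl jI] := bounds k.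
  rewrite (Omega_closed_form R h1 hl jI) /x /p natrD natrM; field.
  by rewrite !pnatr_eq0 -!lt0n h1 subn_gt0.
under eq_fun do rewrite Omega_k.
apply: cvgD; apply: cvgM => //.
  exact: cvgD (cvg_cst (1 : R)) xa.
exact: cvgB (cvg_cst (1 : R)) pow.
Qed.

Theorem theorem7 (R : realType) :
  (forall (n h l : nat) (I : {set 'I_n}) (j : 'I_n),
     (2 <= n)%N -> (1 <= h)%N -> (l <= (n - 1) * h)%N -> j \notin I ->
     let pi : R := l%:R / ((n - 1) * h)%:R in
     Omega R h l I j =
       (h + l)%:R * (1 - (1 - pi) ^+ #|I|)
       + (#|I| * h)%:R * pi * (1 - pi) ^+ #|I|)
  /\
  (forall (alpha beta : R) (n h l : nat -> nat)
          (I : forall k, {set 'I_(n k)}) (j : forall k, 'I_(n k)),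
     (forall k, [/\ (2 <= n k)%N, (1 <= h k)%N,
                    (l k <= (n k - 1) * h k)%N & j k \notin I k]) ->
     ((n k)%:R : R) @[k --> \oo] --> +oo ->
     ((l k)%:R / (h k)%:R : R) @[k --> \oo] --> alpha ->
     ((#|I k|)%:R / (n k)%:R : R) @[k --> \oo] --> beta ->
     (Omega R (h k) (l k) (I k) (j k) / (h k)%:R) @[k --> \oo] -->
       (1 + alpha) * (1 - expR (- (alpha * beta)))
       + alpha * beta * expR (- (alpha * beta))).
Proof.
split=> [n h l I j _ h_gt0 l_le jI|]; first exact: Omega_closed_form.
exact: Omega_limit.
Qed.
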